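(* Let $S$ be a $\Gamma$-semiring with zero having a left unity and a right unity, and let $L$ be its left operator semiring. Let $I$ be an ideal (resp. left ideal, right ideal) of $L$ and $\lambda_I$ its characteristic function. Then $(\lambda_I)^{+}=\lambda_{I^{+}}$. Moreover, $I^{+}$ is an ideal (resp. left ideal, right ideal) of $S$.
   Context: A $\Gamma$-semiring: $S$ and $\Gamma$ are additive commutative semigroups with a map $S\times\Gamma\times S\to S$, $(a,\alpha,b)\mapsto a\alpha b$, such that $(a+b)\alpha c=a\alpha c+b\alpha c$, $a\alpha(b+c)=a\alpha b+a\alpha c$, $a(\alpha+\beta)b=a\alpha b+a\beta b$, $a\alpha(b\beta c)=(a\alpha b)\beta c$. With zero: $(S,+)$, $(\Gamma,+)$ are monoids, $0_S\alpha x=0_S=x\alpha0_S$, $x0_\Gamma y=0_S$. Left operator semiring $L$: $F$ is the free additive commutative semigroup on $S\times\Gamma$; $\sum_i(x_i,\alpha_i)\,\rho\,\sum_j(y_j,\beta_j)$ iff $\sum_ix_i\alpha_ia=\sum_jy_j\beta_ja$ for all $a\in S$; $L=F/\rho$, classes $\sum_i[x_i,\alpha_i]$, multiplication $(\sum_i[x_i,\alpha_i])(\sum_j[y_j,\beta_j])=\sum_{i,j}[x_i\alpha_iy_j,\beta_j]$. A left unity of $S$ is $\sum_i[e_i,\delta_i]\in L$ with $\sum_ie_i\delta_ia=a$ for all $a$; a right unity is a finite family $\gamma_j\in\Gamma,f_j\in S$ with $\sum_ja\gamma_jf_j=a$ for all $a$. A left ideal of $S$ is a nonempty subset $J$ closed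 under addition with $x\gamma a\in J$ for all $x\in S,\gamma\in\Gamma,a\in J$; right ideal: $a\gamma x\in J$; ideal: both. Ideals (left, right) of the semiring $L$ are defined in the usual way. For $P\subseteq L$: $P^{+}=\{a\in S:[a,\gamma]\in P\text{ for all }\gamma\in\Gamma\}$. For a fuzzy subset $\mu$ of $L$: $\mu^{+}(x)=\inf_{\gamma\in\Gamma}\mu([x,\gamma])$. $\lambda_X$ denotes the characteristic function of a set $X$. *)

From HB Require Import structures.
From mathcomp Require Import all_boot all_order all_algebra.
From mathcomp Require Import boolp classical_sets functions reals numfun.
Set Implicit Arguments. Unset Strict Implicit. Unset Printing Implicit Defensive.
Import GRing.Theory Num.Theory.
Local Open Scope classical_set_scope.

Record GSR := {
  gS : Type; gG : Type;
  addS : gS -> gS -> gS; addG : gG -> gG -> gG;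
  zeroS : gS; zeroG : gG;
  gop : gS -> gG -> gS -> gS;
  addSA : forall a b c, addS a (addS b c) = addS (addS a b) c;
  addSC : forall a b, addS a b = addS b a;
  addGA : forall a b c, addG a (addG b c) = addG (addG a b) c;
  addGC : forall a b, addG a b = addG b a;
  gop_addl : forall a b al c, gop (addS a b) al c = addS (gop a al c) (gop b al c);
  gop_addr : forall a al b c, gop a al (addS b c) = addS (gop a al b) (gop a al c);
  gop_addm : forall a al be b, gop a (addG al be) b = addS (gop a al b) (gop a be b);
  gopA : forall a al b be c, gop a al (gop b be c) = gop (gop a al b) be c;
  add0S : forall a, addS zeroS a = a;
  add0G : forall al, addG zeroG al = al;
  gop0l : forall al x, gop zeroS al x = zeroS;
  gop0r : forall x al, gop x al zeroS = zeroS;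
  gop0m : forall x y, gop x zeroG y = zeroS
}.

Section LeftOp.
Variable T : GSR.
Local Notation S := (gS T).
Local Notation G := (gG T).

(** Elements of the free additive commutative semigroup F on S x G:
    nonempty formal sums, represented by a head and a tail list. *)
Definition F := ((S * G) * seq (S * G))%type.
Definition Flist (u : F) : seq (S * G) := u.1 :: u.2.

Definition Feval (u : F) (a : S) : S :=
  foldr (fun p acc => addS (gop p.1 p.2 a) acc) (zeroS T) (Flist u).

Definition rho (u v : F) : Prop := forall a, Feval u a = Feval v a.

(** The left operator semiring L = F / rho, as the type of rho-classes. *)
Definition L := {P : F -> Prop | exists u, P = rho u}.
Definition cls (u : F) : L := exist _ (rho u) (ex_intro _ u erefl).
Definition rep (A : L) : F := proj1_sig (cid (proj2_sig A)).

Definition br (x : S) (g : G) : L := cls ((x, g), [::]).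

Definition addF (u v : F) : F := (u.1, u.2 ++ Flist v).
Definition mulF (u v : F) : F :=
  let l := [seq (gop p.1 p.2 q.1, q.2) | p <- Flist u, q <- Flist v] in
  (head (u.1.1, u.1.2) l, behead l).
(* head is never used as default since l is nonempty *)

Definition addL (A B : L) : L := cls (addF (rep A) (rep B)).
Definition mulL (A B : L) : L := cls (mulF (rep A) (rep B)).

Definition has_left_unity : Prop := exists u : F, forall a, Feval u a = a.
Definition has_right_unity : Prop :=
  exists s : seq (G * S), forall a,
    foldr (fun p acc => addS (gop a p.1 p.2) acc) (zeroS T) s = a.

Inductive ideal_kind := TwoSided | LeftSided | RightSided.

Definition idealL (k : ideal_kind) (I : set L) : Prop :=
  (exists A, I A) /\ (forall A B, I A -> I B -> I (addL A B)) /\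
  match k with
  | TwoSided => (forall X A, I A -> I (mulL X A)) /\ (forall X A, I A -> I (mulL A X))
  | LeftSided => forall X A, I A -> I (mulL X A)
  | RightSided => forall X A, I A -> I (mulL A X)
  end.

Definition idealS (k : ideal_kind) (J : set S) : Prop :=
  (exists a, J a) /\ (forall a b, J a -> J b -> J (addS a b)) /\
  match k with
  | TwoSided => (forall x g a, J a -> J (gop x g a)) /\ (forall x g a, J a -> J (gop a g x))
  | LeftSided => forall x g a, J a -> J (gop x g a)
  | RightSided => forall x g a, J a -> J (gop a g x)
  end.

Definition Lplus (P : set L) : set S := fun a => forall g, P (br a g).

Definition fplus (R : realType) (mu : L -> R) : S -> R :=
  fun x => inf [set mu (br x g) | g in [set: G]].

End LeftOp.

From mathcomp Require Import all_boot all_order all_algebra.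
From mathcomp Require Import boolp classical_sets functions reals numfun.
Local Open Scope classical_set_scope.
Local Open Scope ring_scope.
Import Order.TTheory GRing.Theory Num.Theory.

(* The brackets [a, g] multiply and add in L exactly as a and g do in S:
   [x, g] [a, d] = [x g a, d] and [a, g] + [b, g] = [a + b, g], while [0, g]
   is absorbing on both sides.  So closure of an ideal I of L transfers to
   I^+, and [0, g] lies in I, which makes I^+ nonempty.  The equation
   (lambda_I)^+ = lambda_(I^+) holds for an arbitrary subset I: the infimum
   over g of the 0/1 values lambda_I [x, g] is 1 exactly when every [x, g]
   lies in I. *)

Lemma inf_lbound_mem (R : realType) (E : set R) (x : R) :
  E x -> lbound E x -> inf E = x.
Proof.
move=> Ex lbEx; apply/le_anti/andP; split.
- exact: (ge_inf (ex_intro _ x lbEx) Ex).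
- exact: (lb_le_inf (ex_intro _ x Ex) lbEx).
Qed.

Section LeftOperatorSemiring.
Set Implicit Arguments.
Variable T : GSR.
Local Notation S := (gS T).
Local Notation G := (gG T).

Lemma addS0 (a : S) : addS a (zeroS T) = a.
Proof. by rewrite addSC add0S. Qed.

Definition eval_seq (s : seq (S * G)) (c : S) : S :=
  foldr (fun p acc => addS (gop p.1 p.2 c) acc) (zeroS T) s.

Lemma eval_seq_cat s t c :
  eval_seq (s ++ t) c = addS (eval_seq s c) (eval_seq t c).
Proof. by elim: s => [|p s IH] /=; rewrite ?add0S // IH addSA. Qed.

Lemma eval_seq_map (p : S * G) t c :
  eval_seq [seq (gop p.1 p.2 q.1, q.2) | q <- t] c = gop p.1 p.2 (eval_seq t c).
Proof. by elim: t => [|q t IH] /=; rewrite ?gop0r // IH gop_addr gopA. Qed.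

Lemma eval_seq_allpairs s t c :
  eval_seq [seq (gop p.1 p.2 q.1, q.2) | p <- s, q <- t] c
  = eval_seq s (eval_seq t c).
Proof. by elim: s => [|p s IH] //=; rewrite eval_seq_cat eval_seq_map IH. Qed.

Lemma Feval_mulF (u v : F T) c : Feval (mulF u v) c = Feval u (Feval v c).
Proof.
have -> : Feval (mulF u v) c =
    eval_seq [seq (gop p.1 p.2 q.1, q.2) | p <- Flist u, q <- Flist v] c.
  by case: u => [[x g] s]; case: v => [[y d] t].
exact: eval_seq_allpairs.
Qed.

Lemma Feval_addF (u v : F T) c :
  Feval (addF u v) c = addS (Feval u c) (Feval v c).
Proof.
rewrite /Feval /= -[foldr _ _ (_ ++ _)]/(eval_seq _ _) eval_seq_cat.
by rewrite addSA.
Qed.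

Lemma Feval0 (u : F T) : Feval u (zeroS T) = zeroS T.
Proof. by rewrite /Feval; elim: (Flist u) => [|p s IH] //=; rewrite IH gop0r add0S. Qed.

Lemma Feval_rep (u : F T) c : Feval (rep (cls u)) c = Feval u c.
Proof.
rewrite /rep; case: (cid _) => w /= rho_u_w.
by have : rho u u by []; rewrite rho_u_w => ->.
Qed.

Lemma eq_cls (u v : F T) : rho u v -> cls u = cls v.
Proof.
move=> rho_uv; apply: eq_exist; apply: funext => w; apply: propext.
by split=> rho_w a; [rewrite -rho_uv rho_w | rewrite rho_uv rho_w].
Qed.

Lemma mulL_br (x : S) g (a : S) d : mulL (br x g) (br a d) = br (gop x g a) d.
Proof.
apply: eq_cls => c; rewrite Feval_mulF !Feval_rep /Feval /=.
by rewrite gop_addr gop0r !addS0 gopA.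
Qed.

Lemma addL_br (a b : S) g : addL (br a g) (br b g) = br (addS a b) g.
Proof.
apply: eq_cls => c; rewrite Feval_addF !Feval_rep /Feval /=.
by rewrite !addS0 gop_addl.
Qed.

Lemma mul0L (X : L T) g : mulL (br (zeroS T) g) X = br (zeroS T) g.
Proof.
apply: eq_cls => c; rewrite Feval_mulF !Feval_rep /Feval /=.
by rewrite !gop0l add0S.
Qed.

Lemma mulL0 (X : L T) g : mulL X (br (zeroS T) g) = br (zeroS T) g.
Proof.
apply: eq_cls => c; rewrite Feval_mulF !Feval_rep.
by rewrite [Feval _ c]/Feval /= gop0l add0S Feval0.
Qed.

Lemma fplus_indic (R : realType) (P : set (L T)) :
  fplus (\1_P : L T -> R) = \1_(Lplus P).
Proof.
apply: funext => x; rewrite /fplus indicE.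
have [Px | nPx] := boolP (x \in Lplus P).
  have Pxg g : (\1_P : L T -> R) (br x g) = 1.
    by rewrite indicE (mem_set (set_mem Px g)).
  apply: inf_lbound_mem; first by exists (zeroG T).
  by move=> _ [g _ <-]; rewrite Pxg.
have [g nPxg] : exists g, ~ P (br x g).
  apply/existsNP => allP; move/negP: nPx; apply; exact/mem_set.
apply: inf_lbound_mem; first by exists g => //; rewrite indicE memNset.
by move=> _ [d _ <-]; rewrite indicE.
Qed.

Lemma idealL_Lplus0 k (I : set (L T)) : idealL k I -> Lplus I (zeroS T).
Proof.
move=> [[A IA] [_ Imul]] g.
case: k Imul => [[Il _]|Il|Ir].
- by rewrite -(mul0L A g); exact: Il.
- by rewrite -(mul0L A g); exact: Il.
- by rewrite -(mulL0 A g); exact: Ir.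
Qed.

Lemma idealS_Lplus k (I : set (L T)) : idealL k I -> idealS k (Lplus I).
Proof.
move=> idI; have I0 := idealL_Lplus0 idI; move: idI => [_ [Iadd Imul]].
split; first by exists (zeroS T).
split; first by move=> a b Ia Ib g; rewrite -addL_br; exact: Iadd.
have left_closed : (forall X A, I A -> I (mulL X A)) ->
    forall x g a, Lplus I a -> Lplus I (gop x g a).
  by move=> Il x g a Ia d; rewrite -mulL_br; exact: Il.
have right_closed : (forall X A, I A -> I (mulL A X)) ->
    forall x g a, Lplus I a -> Lplus I (gop a g x).
  by move=> Ir x g a Ia d; rewrite -mulL_br; exact: Ir.
case: k Imul => [[Il Ir]|Il|Ir].
- by split; [exact: left_closed | exact: right_closed].
- exact: left_closed.
- exact: right_closed.
Qed.

End LeftOperatorSemiring.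

Theorem lemma3p7 (R : realType) (T : GSR) (k : ideal_kind) (I : set (L T)) :
  has_left_unity T -> has_right_unity T -> idealL k I ->
  fplus (\1_I : L T -> R) = (\1_(Lplus I) : gS T -> R) /\ idealS k (Lplus I).
Proof.
move=> _ _ idI; split; [exact: fplus_indic | exact: idealS_Lplus].
Qed.
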